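(* Let $\sigma$ be any two-qubit density matrix of rank at most $2$. Then there exist single-qubit unitaries $U_A,U_B$ and parameters $\theta,\phi,\alpha\in[0,\pi/2]$, $\beta\in[0,2\pi]$, $\nu_1,\nu_2\in[0,1]$ with $\nu_1+\nu_2=1$ such that $(U_A\otimes U_B)\,\sigma\,(U_A\otimes U_B)^\dagger=\nu_1|\psi_1\rangle\langle\psi_1|+\nu_2|\psi_2\rangle\langle\psi_2|$, where $|\psi_1\rangle=\cos\theta|00\rangle+\sin\theta|11\rangle$ and $|\psi_2\rangle=\cos\phi(\cos\alpha|01\rangle+\sin\alpha|10\rangle)+e^{i\beta}\sin\phi(\sin\theta|00\rangle-\cos\theta|11\rangle)$.
   Context: Qubits are labelled so that the first tensor factor belongs to Alice and the second to Bob; $\{|0\rangle,|1\rangle\}$ is the computational basis and $|ij\rangle=|i\rangle\otimes|j\rangle$. *)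

From mathcomp Require Import all_boot all_order all_algebra.
From mathcomp Require Export complex.
From mathcomp Require Export reals trigo.
Import GRing.Theory Num.Theory.
Set Implicit Arguments. Unset Strict Implicit. Unset Printing Implicit Defensive.
Local Open Scope ring_scope.
Local Open Scope complex_scope.

Section QubitDefs.
Variable R : realType.
Notation C := R[i].

Definition adjmx (m n : nat) (A : 'M[C]_(m, n)) : 'M[C]_(n, m) :=
  \matrix_(i < n, j < m) (A j i)^*.

Definition unitary2 (U : 'M[C]_2) : Prop := U *m adjmx U = 1%:M.

Definition density4 (rho : 'M[C]_4) : Prop :=
  [/\ adjmx rho = rho,
      (forall v : 'cV[C]_4, 0 <= (adjmx v *m rho *m v) 0 0)
    & \tr rho = 1].

(* index of |ab> is 2a+b : Alice (first factor) is the high bit *)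
Definition hi (k : 'I_4) : 'I_2 := inord (k %/ 2).
Definition lo (k : 'I_4) : 'I_2 := inord (k %% 2).

Definition kron2 (A B : 'M[C]_2) : 'M[C]_4 :=
  \matrix_(i < 4, j < 4) (A (hi i) (hi j) * B (lo i) (lo j)).

Definition ket (a b : nat) : 'cV[C]_4 :=
  \col_(k < 4) (((k : nat) == 2 * a + b)%N)%:R.

Definition proj (psi : 'cV[C]_4) : 'M[C]_4 := psi *m adjmx psi.

End QubitDefs.

From mathcomp Require Import all_boot all_order all_algebra.
From mathcomp Require Import complex reals trigo.
From mathcomp Require Import spectral sesquilinear.
From mathcomp Require Import ring lra.
Import Order.TTheory GRing.Theory Num.Theory.
Set Implicit Arguments. Unset Strict Implicit. Unset Printing Implicit Defensive.
Local Open Scope ring_scope.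
Local Open Scope complex_scope.
Import Normc.

(* A density matrix of rank at most two is a mixture nu1 |w1><w1| + nu2 |w2><w2| of
   two orthonormal eigenvectors.  Local unitaries bring w1 to its Schmidt form
   cos theta |00> + sin theta |11>, obtained from a singular value decomposition of
   its 2x2 coefficient matrix.  Orthogonality to this state forces the |00>, |11>
   part of w2 to be t (sin theta, - cos theta) for some t.  The local phases
   diag(z, z^* ) (x) diag(z^*, z) fix the Schmidt form and multiply the |01> and |10>
   coefficients of w2 by z^2 and z^*^2, which is enough to give both the same phase c
   as a global factor; spherical coordinates of (|w2_01|, |w2_10|, t / c) then
   provide phi, alpha and beta. *)

Section ComplexPhase.
Variable R : realType.
Local Notation C := R[i].
Implicit Types z u : C.

Lemma conjcM z u : conjc (z * u) = conjc z * conjc u. Proof. exact: rmorphM. Qed.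
Lemma conjcD z u : conjc (z + u) = conjc z + conjc u. Proof. exact: rmorphD. Qed.
Lemma conjcB z u : conjc (z - u) = conjc z - conjc u. Proof. exact: rmorphB. Qed.
Lemma conjcN z : conjc (- z) = - conjc z. Proof. exact: rmorphN. Qed.
Lemma conjcV z : conjc (z^-1) = (conjc z)^-1. Proof. exact: fmorphV. Qed.
Lemma conjcX z n : conjc (z ^+ n) = conjc z ^+ n. Proof. exact: rmorphXn. Qed.

Definition conjcE := (conjcM, conjcD, conjcB, conjcN, conjcV, conjcX,
  @conjcK R, @conjc_real R, @conjc0 R, @conjc1 R, @conjc_nat R).

Lemma normc_ge0 z : 0 <= normc z. Proof. by case: z => a b; apply: sqrtr_ge0. Qed.

Lemma mulcJ_normc z : z * conjc z = (normc z)%:C ^+ 2.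
Proof. by rewrite -sqr_normc normc_def; case: z. Qed.

Lemma normc_eq1 z : (z * conjc z = 1) <-> (normc z = 1).
Proof.
rewrite mulcJ_normc -rmorphXn; split => [[]|->]; last by rewrite expr1n.
move/eqP; rewrite sqrf_eq1 => /orP[/eqP //|/eqP h].
by have := normc_ge0 z; rewrite h; lra.
Qed.

Lemma complex_ge0 z : 0 <= z -> z = (complex.Re z)%:C /\ 0 <= complex.Re z.
Proof. by case: z => x y; rewrite lecE /= => /andP[/eqP -> x0]. Qed.

Definition phase z : C := if z == 0 then 1 else z / (normc z)%:C.

Lemma normc_neq0 z : z != 0 -> (normc z)%:C != 0 :> C.
Proof. by move=> z0; apply: contra z0 => /eqP/eq0_normC ->. Qed.

Lemma phase_unit z : phase z * conjc (phase z) = 1.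
Proof.
rewrite /phase; case: eqP => [_|/eqP z0]; first by rewrite rmorph1 mulr1.
have nz := normc_neq0 z0.
rewrite !conjcE.
transitivity (z * conjc z / (normc z)%:C ^+ 2); first by field.
by rewrite mulcJ_normc divff // expf_neq0.
Qed.

Lemma mulcJ_phase z : z * conjc (phase z) = (normc z)%:C.
Proof.
rewrite /phase; case: eqP => [->|/eqP z0]; first by rewrite normc0 mul0r.
have nz := normc_neq0 z0.
by rewrite !conjcE mulrA mulcJ_normc expr2 mulfK.
Qed.

Lemma phase_normc z : phase z * (normc z)%:C = z.
Proof. by rewrite -mulcJ_phase mulrA [phase z * z]mulrC -mulrA phase_unit mulr1. Qed.

Lemma sqrtc_unit u : u * conjc u = 1 -> exists z, z ^+ 2 = u /\ z * conjc z = 1.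
Proof.
move=> /normc_eq1 u1; exists (sqrtc u); split; first exact: sqr_sqrtc.
apply/normc_eq1; have := u1; rewrite -[u in normc u]sqr_sqrtc expr2 normcM.
move/eqP; rewrite -expr2 sqrf_eq1 => /orP[/eqP //|/eqP h].
by have := normc_ge0 (sqrtc u); rewrite h; lra.
Qed.

End ComplexPhase.

Section Angles.
Variable R : realType.

Lemma acos_cos_sin (a b : R) : a ^+ 2 + b ^+ 2 = 1 ->
  [/\ 0 <= acos a <= pi, cos (acos a) = a & sin (acos a) = `|b|].
Proof.
move=> h; have ha : -1 <= a <= 1 by apply/andP; split; nra.
have [h1 h2] := acos_def ha; split => //.
by rewrite sin_acos // (_ : 1 - a ^+ 2 = b ^+ 2) ?sqrtr_sqr //; lra.
Qed.

Lemma polar_angle_quarter (c s : R) : 0 <= c -> 0 <= s -> c ^+ 2 + s ^+ 2 = 1 ->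
  exists t, [/\ 0 <= t <= pi / 2, cos t = c & sin t = s].
Proof.
move=> c0 s0 h; have [/andP[t0 t1] ct st] := acos_cos_sin h.
exists (acos c); split => //; last by rewrite st ger0_norm.
rewrite t0 leNgt; apply/negP => hlt; have hp := pi_gt0 R.
have : 0 < cos (acos c - pi) by apply: cos_gt0_pihalf; apply/andP; split; lra.
rewrite cosB cospi sinpi ct; lra.
Qed.

Lemma polar_angle (a b : R) : a ^+ 2 + b ^+ 2 = 1 ->
  exists t, [/\ 0 <= t <= 2 * pi, cos t = a & sin t = b].
Proof.
move=> h; have [/andP[t0 t1] ct st] := acos_cos_sin h; have hp := pi_gt0 R.
have [b0|b0] := leP 0 b.
  by exists (acos a); split; [lra | | rewrite st ger0_norm].
exists (pi *+ 2 - acos a); split; first by rewrite mulr2n; lra.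
- by rewrite cosB cos2pi sin2pi ct; ring.
- by rewrite sinB cos2pi sin2pi st ltr0_norm //; ring.
Qed.

End Angles.

Section Matrices.
Variable R : realType.
Local Notation C := R[i].

Lemma sum_ord2 (F : 'I_2 -> C) : \sum_(i < 2) F i = F (inord 0) + F (inord 1).
Proof.
by rewrite big_ord_recl big_ord1; congr (F _ + F _); apply/val_inj; rewrite /= inordK.
Qed.

Lemma sum_ord4 (F : 'I_4 -> C) :
  \sum_(i < 4) F i = F (inord 0) + F (inord 1) + F (inord 2) + F (inord 3).
Proof.
rewrite !big_ord_recl big_ord0 addr0 !addrA.
by congr (F _ + F _ + F _ + F _); apply/val_inj; rewrite /= ?inordK.
Qed.

Lemma ord2_cases (i : 'I_2) : i = inord 0 \/ i = inord 1.
Proof.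
by case: i => [[|[|//]] ?]; [left | right]; apply/val_inj; rewrite /= inordK.
Qed.

Lemma ord4_cases (i : 'I_4) :
  [\/ i = inord 0, i = inord 1, i = inord 2 | i = inord 3].
Proof.
case: i => [[|[|[|[|//]]]] ?]; [apply: Or41 | apply: Or42 | apply: Or43 | apply: Or44];
  by apply/val_inj; rewrite /= inordK.
Qed.

Lemma inord_eq n (a b : nat) : (a <= n)%N -> (b <= n)%N ->
  ((inord a : 'I_n.+1) == inord b) = (a == b).
Proof. by move=> ha hb; rewrite -(inj_eq val_inj) /= !inordK. Qed.

Lemma hiE (k : nat) : (k < 4)%N -> hi (inord k) = inord (k %/ 2).
Proof. by move=> hk; rewrite /hi inordK. Qed.

Lemma loE (k : nat) : (k < 4)%N -> lo (inord k) = inord (k %% 2).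
Proof. by move=> hk; rewrite /lo inordK. Qed.

Lemma adjmxK m n (A : 'M[C]_(m, n)) : adjmx (adjmx A) = A.
Proof. by apply/matrixP => i j; rewrite !mxE conjcK. Qed.

Lemma adjmxM m n p (A : 'M[C]_(m, n)) (B : 'M[C]_(n, p)) :
  adjmx (A *m B) = adjmx B *m adjmx A.
Proof.
apply/matrixP => i j; rewrite !mxE rmorph_sum; apply: eq_bigr => k _.
by rewrite !mxE rmorphM mulrC.
Qed.

Lemma adjmxZ m n (c : C) (A : 'M[C]_(m, n)) : adjmx (c *: A) = conjc c *: adjmx A.
Proof. by apply/matrixP => i j; rewrite !mxE rmorphM. Qed.

Lemma kron2M (A B A' B' : 'M[C]_2) :
  kron2 A B *m kron2 A' B' = kron2 (A *m A') (B *m B').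
Proof.
apply/matrixP => i j; rewrite !mxE sum_ord4 !mxE !sum_ord2 !hiE ?loE //=; ring.
Qed.

Lemma adjmx_kron2 (A B : 'M[C]_2) : adjmx (kron2 A B) = kron2 (adjmx A) (adjmx B).
Proof. by apply/matrixP => i j; rewrite !mxE rmorphM. Qed.

Lemma kron2_1 : kron2 (1%:M : 'M[C]_2) 1%:M = 1%:M.
Proof.
apply/matrixP => i j; rewrite !mxE.
by case: (ord4_cases i) => ->; case: (ord4_cases j) => ->;
  rewrite !hiE ?loE //= !inord_eq //= ?mulr0 ?mul0r ?mulr1.
Qed.

Lemma unitary2M (A B : 'M[C]_2) : unitary2 A -> unitary2 B -> unitary2 (A *m B).
Proof.
rewrite /unitary2 => hA hB.
by rewrite adjmxM mulmxA -[A *m B *m _]mulmxA hB mulmx1 hA.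
Qed.

Lemma unitary_kron2 (A B : 'M[C]_2) : unitary2 A -> unitary2 B ->
  kron2 A B *m adjmx (kron2 A B) = 1%:M.
Proof. by move=> hA hB; rewrite adjmx_kron2 kron2M hA hB kron2_1. Qed.

Lemma unitary_adjmxM n (U : 'M[C]_n.+1) (u v : 'cV[C]_n.+1) :
  U *m adjmx U = 1%:M -> adjmx (U *m u) *m (U *m v) = adjmx u *m v.
Proof. by move=> /mulmx1C hU; rewrite adjmxM -mulmxA (mulmxA (adjmx U)) hU mul1mx. Qed.

Lemma proj_mulmx (U : 'M[C]_4) (w : 'cV[C]_4) : U *m proj w *m adjmx U = proj (U *m w).
Proof. by rewrite /proj adjmxM !mulmxA. Qed.

Lemma projZ (c : C) (w : 'cV[C]_4) : proj (c *: w) = (c * conjc c) *: proj w.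
Proof. by rewrite /proj adjmxZ -scalemxAl -scalemxAr scalerA. Qed.

Definition mat2 (a b c d : C) : 'M[C]_2 :=
  \matrix_(i < 2, j < 2)
    if (i : nat) == 0%N then (if (j : nat) == 0%N then a else b)
    else (if (j : nat) == 0%N then c else d).

Lemma mat2E00 a b c d : mat2 a b c d (inord 0) (inord 0) = a.
Proof. by rewrite mxE !inordK. Qed.
Lemma mat2E01 a b c d : mat2 a b c d (inord 0) (inord 1) = b.
Proof. by rewrite mxE !inordK. Qed.
Lemma mat2E10 a b c d : mat2 a b c d (inord 1) (inord 0) = c.
Proof. by rewrite mxE !inordK. Qed.
Lemma mat2E11 a b c d : mat2 a b c d (inord 1) (inord 1) = d.
Proof. by rewrite mxE !inordK. Qed.
Definition mat2E := (mat2E00, mat2E01, mat2E10, mat2E11).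

Lemma unitary_mat2 (a b c d : C) :
  a * conjc a + b * conjc b = 1 -> a * conjc c + b * conjc d = 0 ->
  c * conjc c + d * conjc d = 1 -> unitary2 (mat2 a b c d).
Proof.
move=> h1 h2 h3; have h2' : c * conjc a + d * conjc b = 0.
  rewrite -[c]conjcK -[d]conjcK -!conjcM -conjcD.
  by rewrite [conjc c * a]mulrC [conjc d * b]mulrC h2 conjc0.
apply/matrixP => i j; case: (ord2_cases i) => ->; case: (ord2_cases j) => ->;
  by rewrite !mxE sum_ord2 !mxE !inordK //= inord_eq.
Qed.

End Matrices.

Section OrthonormalDecomposition.
Variables (R : realType) (n : nat).
Local Notation C := R[i].
Variables (S : 'M[C]_n) (w : 'I_n -> 'cV[C]_n) (d : 'I_n -> C).
Hypothesis w_orthonormal : forall k l, adjmx (w k) *m w l = (k == l)%:R%:M.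
Hypothesis S_decomp : S = \sum_k d k *: (w k *m adjmx (w k)).

Lemma orthonormal_decomp_eigen l : S *m w l = d l *: w l.
Proof.
rewrite S_decomp mulmx_suml (bigD1 l) //= big1 ?addr0 => [|k /negbTE kl];
  rewrite -scalemxAl -mulmxA w_orthonormal ?kl ?eqxx mul_mx_scalar ?scale1r //.
by rewrite scale0r scaler0.
Qed.

Lemma orthonormal_decomp_quad l : (adjmx (w l) *m S *m w l) 0 0 = d l.
Proof.
by rewrite -mulmxA orthonormal_decomp_eigen -scalemxAr w_orthonormal eqxx !mxE eqxx mulr1.
Qed.

Lemma orthonormal_decomp_trace : \tr S = \sum_k d k.
Proof.
rewrite S_decomp (big_morph _ (@mxtraceD _ _) (mxtrace0 _ _)); apply: eq_bigr => k _.
by rewrite mxtraceZ mxtrace_mulC w_orthonormal eqxx mxtrace_scalar mulr1.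
Qed.

Lemma orthonormal_decomp_rank : (#|[set k | d k != 0%R]| <= \rank S)%N.
Proof.
set K := [set k | d k != 0]; pose f (i : 'I_#|K|) := enum_val i.
have dfK i : d (f i) != 0 by have := enum_valP i; rewrite inE.
pose B := \matrix_(i < #|K|, j < n) ((d (f i))^-1 * conjc (w (f i) j 0)).
pose W := \matrix_(j < n, i < #|K|) w (f i) j 0.
have BSW : B *m (S *m W) = 1%:M.
  apply/matrixP => i i'; rewrite !mxE.
  have /matrixP/(_ 0 0) := w_orthonormal (f i) (f i').
  rewrite (inj_eq enum_val_inj) !mxE eqxx mulr1n => orth.
  transitivity ((d (f i))^-1 * d (f i') * (i == i')%:R).
    rewrite -orth mulr_sumr; apply: eq_bigr => j _; rewrite !mxE.
    have /matrixP/(_ j 0) := orthonormal_decomp_eigen (f i'); rewrite !mxE => eigen.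
    by under eq_bigr do rewrite mxE; rewrite eigen; ring.
  by have [->|_] := eqVneq i i'; rewrite ?mulr0 // mulVf ?mul1r.
rewrite -{1}(mxrank1 C #|K|) -BSW.
exact: leq_trans (mxrankM_maxr _ _) (mxrankM_maxl _ _).
Qed.

End OrthonormalDecomposition.

Lemma subset_pair (T : finType) (A : {set T}) (a0 b0 : T) : a0 != b0 ->
  (#|A| <= 2)%N -> exists a b, a != b /\ A \subset [set a; b].
Proof.
move=> ab0; rewrite leq_eqVlt ltnS leq_eqVlt ltnS leqn0.
case/or3P => [/cards2P[a [b [ab ->]]] | /cards1P[a ->] | /eqP/cards0_eq ->].
- by exists a, b.
- have [->|aa0] := eqVneq a a0; first by exists a0, b0; rewrite sub1set !inE eqxx.
  by exists a, a0; rewrite sub1set !inE eqxx.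
- by exists a0, b0; rewrite sub0set.
Qed.

Section Density.
Variable R : realType.
Local Notation C := R[i].
Local Open Scope sesquilinear_scope.

Lemma hermitian_orthonormal_decomp n (S : 'M[C]_n) : adjmx S = S ->
  exists (w : 'I_n -> 'cV[C]_n) (d : 'I_n -> C),
    (forall k l, adjmx (w k) *m w l = (k == l)%:R%:M) /\
    S = \sum_k d k *: (w k *m adjmx (w k)).
Proof.
move=> herm; have S_normal : S \is normalmx.
  suff adjS : S ^t* = S by rewrite qualifE adjS.
  by rewrite -{2}herm; apply/matrixP => i j; rewrite !mxE.
have SE := orthomx_spectralP S_normal.
set P := spectralmx S in SE; set d := spectral_diag S in SE.
have P_unitary : P \is unitarymx by apply: spectral_unitarymx.
have PPt : P *m P ^t* = 1%:M by apply/unitarymxP.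
rewrite invmx_unitary // in SE.
exists (fun k => adjmx (row k P)), (fun k => d 0 k); split.
  move=> k l; apply/matrixP => i j; rewrite adjmxK.
  have /matrixP/(_ k l) := PPt; rewrite !mxE => <-.
  by rewrite !ord1 eqxx mulr1n; apply: eq_bigr => u _; rewrite !mxE.
rewrite {1}SE; apply/matrixP => i j.
rewrite mul_mx_diag !mxE summxE; apply: eq_bigr => k _.
by rewrite !mxE big_ord1 !mxE conjcK; ring.
Qed.

Lemma density4_rank2_decomp (sigma : 'M[C]_4) :
  density4 sigma -> (\rank sigma <= 2)%N ->
  exists (w1 w2 : 'cV[C]_4) (n1 n2 : R),
    [/\ adjmx w1 *m w1 = 1%:M, adjmx w2 *m w2 = 1%:M, adjmx w1 *m w2 = 0,
        [/\ 0 <= n1, 0 <= n2 & n1 + n2 = 1] &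
        sigma = n1%:C *: proj w1 + n2%:C *: proj w2].
Proof.
case=> herm psd tr1 rk.
have [w [d [orth decomp]]] := hermitian_orthonormal_decomp herm.
have n01 : (inord 0 : 'I_4) != inord 1 by rewrite inord_eq.
have [a [b [ab /subsetP supp]]] :=
  subset_pair n01 (leq_trans (orthonormal_decomp_rank orth decomp) rk).
have d_out k : k != a -> k != b -> d k = 0.
  move=> ka kb; apply: contraNeq (_ : k \notin [set a; b]) => [dk|].
    by apply: supp; rewrite inE dk.
  by rewrite !inE negb_or ka kb.
have sum_ab (V : lmodType C) (F : 'I_4 -> V) :
    \sum_k d k *: F k = d a *: F a + d b *: F b.
  rewrite (bigD1 a) //= (bigD1 b) 1?eq_sym //= big1 ?addr0 // => k /andP[kb ka].
  by rewrite d_out // scale0r.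
have [da da0] : d a = (complex.Re (d a))%:C /\ 0 <= complex.Re (d a).
  by apply: complex_ge0; rewrite -(orthonormal_decomp_quad orth decomp) psd.
have [db db0] : d b = (complex.Re (d b))%:C /\ 0 <= complex.Re (d b).
  by apply: complex_ge0; rewrite -(orthonormal_decomp_quad orth decomp) psd.
exists (w a), (w b), (complex.Re (d a)), (complex.Re (d b)); split.
- by rewrite orth eqxx.
- by rewrite orth eqxx.
- by rewrite orth (negbTE ab); apply/matrixP => i j; rewrite !mxE mul0rn.
- split => //.
  have trab : d a + d b = 1.
    rewrite -tr1 (orthonormal_decomp_trace orth decomp).
    rewrite (bigD1 a) //= (bigD1 b) 1?eq_sym //= big1 ?addr0 // => k /andP[kb ka].
    exact: d_out.
  by apply: (@complexI R); rewrite -[RHS]/(1 : C) -trab {2}da {2}db rmorphD.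
- by rewrite decomp sum_ab -da -db.
Qed.

End Density.

Section TwoByTwo.
Variable R : realType.
Local Notation C := R[i].
Local Notation o0 := (inord 0 : 'I_2).
Local Notation o1 := (inord 1 : 'I_2).

Definition normc2 (u v : C) : R := Num.sqrt (normc u ^+ 2 + normc v ^+ 2).

Lemma normc2_sqr u v : (normc2 u v)%:C ^+ 2 = u * conjc u + v * conjc v.
Proof.
rewrite -rmorphXn sqr_sqrtr ?addr_ge0 ?sqr_ge0 //.
by rewrite rmorphD !rmorphXn -!mulcJ_normc.
Qed.

Lemma normc2_eq0 u v : normc2 u v = 0 -> u = 0 /\ v = 0.
Proof.
move/eqP; rewrite sqrtr_eq0 => le0.
have u0 := normc_ge0 u; have v0 := normc_ge0 v.
by split; apply: eq0_normc; nra.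
Qed.

Lemma unitary_mat2_perp (u v : C) (s : R) : s != 0 ->
  s%:C ^+ 2 = u * conjc u + v * conjc v ->
  unitary2 (mat2 (conjc u / s%:C) (conjc v / s%:C) (- v / s%:C) (u / s%:C)).
Proof.
move=> s0 uv; have sC : s%:C != 0 :> C by apply: contra s0 => /eqP[->].
have s2 : s%:C ^+ 2 != 0 :> C by rewrite expf_neq0.
apply: unitary_mat2; rewrite !conjcE; last 2 first.
- by field.
- by transitivity ((u * conjc u + v * conjc v) / s%:C ^+ 2); [field | rewrite -uv divff].
by transitivity ((u * conjc u + v * conjc v) / s%:C ^+ 2); [field | rewrite -uv divff].
Qed.

Lemma mulmx2E (A B : 'M[C]_2) i j : (A *m B) i j = A i o0 * B o0 j + A i o1 * B o1 j.
Proof. by rewrite mxE sum_ord2. Qed.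

Lemma orthogonal_columns_diag (N : 'M[C]_2) :
  conjc (N o0 o0) * N o0 o1 + conjc (N o1 o0) * N o1 o1 = 0 ->
  exists A, [/\ unitary2 A, (A *m N) o0 o1 = 0 & (A *m N) o1 o0 = 0].
Proof.
set a := N o0 o0; set b := N o0 o1; set c := N o1 o0; set d := N o1 o1 => orth.
have [/normc2_eq0[a0 c0] | s0] := eqVneq (normc2 a c) 0; last first.
  have sC : (normc2 a c)%:C != 0 :> C by apply: contra s0 => /eqP[->].
  exists (mat2 (conjc a / (normc2 a c)%:C) (conjc c / (normc2 a c)%:C)
               (- c / (normc2 a c)%:C) (a / (normc2 a c)%:C)).
  rewrite !mulmx2E !mat2E -/a -/b -/c -/d; split.
  - exact: unitary_mat2_perp (normc2_sqr a c).
  - transitivity ((conjc a * b + conjc c * d) / (normc2 a c)%:C); first by field.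
    by rewrite orth mul0r.
  - by field.
have [/normc2_eq0[b0 d0] | s1] := eqVneq (normc2 b d) 0.
  exists (mat2 1 0 0 1); rewrite !mulmx2E !mat2E -/a -/b -/c -/d.
  by rewrite a0 b0 c0 d0 !mulr0 addr0; split => //; apply: unitary_mat2; ring.
have sC : (normc2 b d)%:C != 0 :> C by apply: contra s1 => /eqP[->].
exists (mat2 (d / (normc2 b d)%:C) (- b / (normc2 b d)%:C)
             (conjc b / (normc2 b d)%:C) (conjc d / (normc2 b d)%:C)).
rewrite !mulmx2E !mat2E -/a -/b -/c -/d a0 c0; split.
- have := @unitary_mat2_perp (conjc d) (- conjc b) (normc2 b d) s1.
  by rewrite !conjcE opprK; apply; rewrite normc2_sqr; ring.
- by field.
- by rewrite !mulr0 addr0.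
Qed.

Lemma svd2 (M : 'M[C]_2) : exists A Q : 'M[C]_2,
  [/\ unitary2 A, unitary2 Q, (A *m M *m adjmx Q) o0 o1 = 0
    & (A *m M *m adjmx Q) o1 o0 = 0].
Proof.
have herm : adjmx (adjmx M *m M) = adjmx M *m M by rewrite adjmxM adjmxK.
have [w [d [orth decomp]]] := hermitian_orthonormal_decomp herm.
pose Q := \matrix_(k < 2, j < 2) conjc (w k j 0).
have Q_unitary : unitary2 Q.
  apply/matrixP => k l; have /matrixP/(_ 0 0) := orth k l.
  by rewrite !mxE eqxx mulr1n => <-; apply: eq_bigr => j _; rewrite !mxE conjcK.
pose N := M *m adjmx Q.
have N_col i k : N i k = (M *m w k) i 0.
  by rewrite !mxE; apply: eq_bigr => j _; rewrite !mxE conjcK.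
have N_orth : conjc (N o0 o0) * N o0 o1 + conjc (N o1 o0) * N o1 o1 = 0.
  have -> : conjc (N o0 o0) * N o0 o1 + conjc (N o1 o0) * N o1 o1
            = (adjmx (M *m w o0) *m (M *m w o1)) 0 0.
    by rewrite !N_col [RHS]mxE sum_ord2 !mxE.
  rewrite adjmxM -mulmxA (mulmxA (adjmx M)).
  rewrite (orthonormal_decomp_eigen orth decomp) -scalemxAr orth inord_eq //=.
  by rewrite !mxE mul0rn mulr0.
have [A [A_unitary A01 A10]] := orthogonal_columns_diag N_orth.
by exists A, Q; rewrite -mulmxA.
Qed.

End TwoByTwo.

Section Schmidt.
Variable R : realType.
Local Notation C := R[i].
Local Notation o0 := (inord 0 : 'I_2).
Local Notation o1 := (inord 1 : 'I_2).

Definition coef_mx (w : 'cV[C]_4) : 'M[C]_2 :=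
  \matrix_(a < 2, b < 2) w (inord (2 * a + b)) 0.

Lemma kron2_mulmxE (A B : 'M[C]_2) (w : 'cV[C]_4) k :
  (kron2 A B *m w) k 0 = (A *m coef_mx w *m B^T) (hi k) (lo k).
Proof.
rewrite !mxE sum_ord4 sum_ord2 !mxE !sum_ord2 !mxE !hiE ?loE //= !inordK //=; ring.
Qed.

Lemma unitary2_conj (Q : 'M[C]_2) : unitary2 Q -> unitary2 (map_mx conjc Q).
Proof.
move=> /matrixP Q_unitary; apply/matrixP => i j; have := Q_unitary i j.
rewrite !mxE => E; rewrite -[RHS]conjc_nat -E rmorph_sum.
by apply: eq_bigr => k _; rewrite !mxE rmorphM.
Qed.

Lemma schmidt_decomp (w : 'cV[C]_4) : adjmx w *m w = 1%:M ->
  exists UA UB : 'M[C]_2, [/\ unitary2 UA, unitary2 UB &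
    exists x y : R, [/\ 0 <= x, 0 <= y, x ^+ 2 + y ^+ 2 = 1 &
      kron2 UA UB *m w = x%:C *: ket R 0 0 + y%:C *: ket R 1 1]].
Proof.
move=> w_unit.
have [A [Q [A_unitary Q_unitary D01 D10]]] := svd2 (coef_mx w).
set D := A *m coef_mx w *m adjmx Q in D01 D10.
set p := D o0 o0; set q := D o1 o1.
pose P := mat2 (conjc (phase p)) 0 0 (conjc (phase q)).
have P_unitary : unitary2 P.
  by apply: unitary_mat2; rewrite !conjcE ?mulr0 ?mul0r ?addr0 ?add0r // mulrC phase_unit.
have UA_unitary := unitary2M P_unitary A_unitary.
have UB_unitary := unitary2_conj Q_unitary.
exists (P *m A), (map_mx conjc Q); split => //.
(* The casts make [%:C] use the [realType] structure of [R], as in the statement,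
   instead of the convertible [rcfType] one carried by [normc], which rewriting
   does not see through. *)
have vE : kron2 (P *m A) (map_mx conjc Q) *m w
          = (normc p : R)%:C *: ket R 0 0 + (normc q : R)%:C *: ket R 1 1.
  apply/matrixP => k j; rewrite (ord1 j) kron2_mulmxE.
  have -> : (map_mx conjc Q)^T = adjmx Q by apply/matrixP => i l; rewrite !mxE.
  rewrite -!mulmxA (mulmxA A) -/D.
  case: (ord4_cases k) => ->; rewrite !hiE ?loE //= mulmx2E !mat2E -/p -/q ?D01 ?D10
    [RHS]mxE !mxE !inordK //= ?mulr0 ?mulr1 ?mul0r ?addr0 ?add0r //;
    by rewrite mulrC mulcJ_phase.
exists (normc p), (normc q); split; rewrite ?normc_ge0 //.
have := unitary_adjmxM w w (unitary_kron2 UA_unitary UB_unitary).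
rewrite w_unit vE => /matrixP/(_ 0 0).
rewrite !mxE sum_ord4 !mxE !inordK // ![(_ == _)%:R]/= => E.
have : (normc p)%:C ^+ 2 + (normc q)%:C ^+ 2 = 1 :> C.
  by apply: etrans E; rewrite !conjcE; ring.
by rewrite -!rmorphXn -rmorphD => /(@complexI R).
Qed.

End Schmidt.

Section PhaseAlignment.
Variable R : realType.
Local Notation C := R[i].

Lemma unit_sqr_ReIm (z : C) : z * conjc z = 1 -> complex.Re z ^+ 2 + complex.Im z ^+ 2 = 1.
Proof. by case: z => a b; simpc => -[h _] /=; rewrite -h; ring. Qed.

Lemma phase_alignment (a b : C) : exists z c : C,
  [/\ z * conjc z = 1, c * conjc c = 1,
      z ^+ 2 * a = c * (normc a)%:C & conjc z ^+ 2 * b = c * (normc b)%:C].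
Proof.
pose u := phase a; pose v := phase b.
have [g [g2 g_unit]] : exists g, g ^+ 2 = conjc (u * v) /\ g * conjc g = 1.
  apply: sqrtc_unit; rewrite conjcK conjcM.
  transitivity ((u * conjc u) * (v * conjc v)); first ring.
  by rewrite !phase_unit mulr1.
have [z [z2 z_unit]] : exists z, z ^+ 2 = conjc u * conjc g /\ z * conjc z = 1.
  apply: sqrtc_unit; rewrite !conjcE.
  transitivity ((u * conjc u) * (g * conjc g)); first ring.
  by rewrite phase_unit g_unit mulr1.
exists z, (conjc g); split => //.
- by rewrite conjcK mulrC.
- by rewrite z2 -mulcJ_phase; ring.
rewrite -conjcX z2 -mulcJ_phase !conjcE.
have ug : u * g = conjc g * conjc v.
  transitivity (u * g ^+ 2 * conjc g); first by rewrite -[LHS]mulr1 -g_unit; ring.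
  rewrite g2 conjcM; transitivity ((u * conjc u) * conjc v * conjc g); first ring.
  by rewrite phase_unit mul1r mulrC.
by transitivity (u * g * b); [ring | rewrite ug; ring].
Qed.

End PhaseAlignment.

Section SphericalCoordinates.
Variable R : realType.
Local Notation C := R[i].

Lemma spherical_coords (a b : R) (t : C) : 0 <= a -> 0 <= b ->
  a ^+ 2 + b ^+ 2 + normc t ^+ 2 = 1 ->
  exists phi alpha beta : R,
    [/\ 0 <= phi <= pi / 2, 0 <= alpha <= pi / 2, 0 <= beta <= 2 * pi,
        cos phi * cos alpha = a /\ cos phi * sin alpha = b &
        (cos beta +i* sin beta) * (sin phi)%:C = t].
Proof.
move=> a0 b0 norm1; pose r := Num.sqrt (a ^+ 2 + b ^+ 2).
have r0 : 0 <= r := sqrtr_ge0 _.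
have r2 : r ^+ 2 = a ^+ 2 + b ^+ 2 by rewrite sqr_sqrtr // addr_ge0 ?sqr_ge0.
have [phi [phi_range cphi sphi]] : exists phi,
    [/\ 0 <= phi <= pi / 2, cos phi = r & sin phi = normc t].
  by apply: polar_angle_quarter (normc_ge0 t) _; rewrite // r2.
have [alpha [alpha_range calpha salpha]] :
    exists alpha, [/\ 0 <= alpha <= pi / 2, r * cos alpha = a & r * sin alpha = b].
  have [rz|rnz] := eqVneq r 0.
    have ab0 : a = 0 /\ b = 0 by move: r2; rewrite rz expr0n /=; split; nra.
    by exists 0; rewrite rz !mul0r; case: ab0 => -> ->; split => //; have := pi_gt0 R; lra.
  have ab1 : (a / r) ^+ 2 + (b / r) ^+ 2 = 1.
    by rewrite !expr_div_n -mulrDl -r2 divff // expf_neq0.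
  have [alpha [alpha_range ca sa]] :=
    polar_angle_quarter (divr_ge0 a0 r0) (divr_ge0 b0 r0) ab1.
  by exists alpha; split => //; [rewrite ca | rewrite sa]; field.
have [beta [beta_range cbeta sbeta]] := polar_angle (unit_sqr_ReIm (phase_unit t)).
exists phi, alpha, beta; split => //; first by rewrite cphi.
by rewrite cbeta sbeta sphi -[X in _ = X]phase_normc; case: (phase t).
Qed.

End SphericalCoordinates.

Section LocalForm.
Variable R : realType.
Local Notation C := R[i].

Lemma orthogonal_rotation (x y : R) (v0 v3 : C) : x ^+ 2 + y ^+ 2 = 1 ->
  x%:C * v0 + y%:C * v3 = 0 ->
  let t := y%:C * v0 - x%:C * v3 in
  [/\ v0 = t * y%:C, v3 = - (t * x%:C) & t * conjc t = v0 * conjc v0 + v3 * conjc v3].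
Proof.
move=> xy orth t; have xyC : x%:C ^+ 2 + y%:C ^+ 2 = 1 :> C.
  by rewrite -!rmorphXn -rmorphD xy.
have orthJ : x%:C * conjc v0 + y%:C * conjc v3 = 0.
  by rewrite -(conjc_real x) -(conjc_real y) -!conjcM -conjcD orth conjc0.
split; rewrite /t.
- by rewrite -[LHS]mul1r -xyC; apply/eqP; rewrite -subr_eq0; apply/eqP;
    transitivity (x%:C * (x%:C * v0 + y%:C * v3)); [ring | rewrite orth mulr0].
- by rewrite -[LHS]mul1r -xyC; apply/eqP; rewrite -subr_eq0; apply/eqP;
    transitivity (y%:C * (x%:C * v0 + y%:C * v3)); [ring | rewrite orth mulr0].
rewrite !conjcE; transitivity ((x%:C ^+ 2 + y%:C ^+ 2) * (v0 * conjc v0 + v3 * conjc v3)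
  - (x%:C * v0 + y%:C * v3) * (x%:C * conjc v0 + y%:C * conjc v3)); first ring.
by rewrite xyC orth mul1r mul0r subr0.
Qed.

Definition col4 (a b c d : C) : 'cV[C]_4 := \col_(k < 4) [:: a; b; c; d]`_k.

Lemma col4_eta (u : 'cV[C]_4) :
  u = col4 (u (inord 0) 0) (u (inord 1) 0) (u (inord 2) 0) (u (inord 3) 0).
Proof.
apply/matrixP => k j; rewrite (ord1 j) mxE.
by case: (ord4_cases k) => ->; rewrite inordK.
Qed.

Lemma col4_kets a b c d :
  col4 a b c d = a *: ket R 0 0 + b *: ket R 0 1 + c *: ket R 1 0 + d *: ket R 1 1.
Proof.
apply/matrixP => k j; rewrite (ord1 j).
case: (ord4_cases k) => ->; rewrite !mxE !inordK // ![(_ == _)%:R]/=.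
all: by rewrite ?mulr1 ?mulr0 ?addr0 ?add0r.
Qed.

Lemma col4_dot a b c d a' b' c' d' :
  (adjmx (col4 a b c d) *m col4 a' b' c' d') 0 0
  = conjc a * a' + conjc b * b' + conjc c * c' + conjc d * d'.
Proof. by rewrite !mxE sum_ord4 !mxE !inordK. Qed.

Lemma kron2_phase_col4 (z a b c d : C) : z * conjc z = 1 ->
  kron2 (mat2 z 0 0 (conjc z)) (mat2 (conjc z) 0 0 z) *m col4 a b c d
  = col4 a (z ^+ 2 * b) (conjc z ^+ 2 * c) d.
Proof.
move=> z_unit; apply/matrixP => k j; rewrite (ord1 j).
case: (ord4_cases k) => ->; rewrite !mxE sum_ord4 !mxE !hiE ?loE //= !inordK //=.
all: rewrite ?mulr0 ?mul0r ?addr0 ?add0r ?[conjc z * z]mulrC ?z_unit ?mul1r //.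
all: by rewrite expr2.
Qed.

Lemma unitary2_phase (z : C) : z * conjc z = 1 ->
  unitary2 (mat2 z 0 0 (conjc z)) /\ unitary2 (mat2 (conjc z) 0 0 z).
Proof.
move=> z_unit; split; apply: unitary_mat2;
  by rewrite ?conjcK ?conjc0 ?mulr0 ?mul0r ?addr0 ?add0r // mulrC.
Qed.

Lemma orthonormal_pair_local_form (w1 w2 : 'cV[C]_4) :
  adjmx w1 *m w1 = 1%:M -> adjmx w2 *m w2 = 1%:M -> adjmx w1 *m w2 = 0 ->
  exists (UA UB : 'M[C]_2) (theta phi alpha beta : R) (c : C),
   [/\ unitary2 UA /\ unitary2 UB,
       [/\ 0 <= theta <= pi / 2, 0 <= phi <= pi / 2 & 0 <= alpha <= pi / 2],
       0 <= beta <= 2 * pi, c * conjc c = 1 &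
       kron2 UA UB *m w1 = (cos theta)%:C *: ket R 0 0 + (sin theta)%:C *: ket R 1 1 /\
       kron2 UA UB *m w2 = c *: ((cos phi)%:C *: ((cos alpha)%:C *: ket R 0 1
                                                  + (sin alpha)%:C *: ket R 1 0)
          + ((cos beta +i* sin beta) * (sin phi)%:C)
              *: ((sin theta)%:C *: ket R 0 0 - (cos theta)%:C *: ket R 1 1))].
Proof.
move=> w1_unit w2_unit w12.
have [UA0 [UB0 [UA0_unitary UB0_unitary [x [y [x0 y0 xy w1E]]]]]] := schmidt_decomp w1_unit.
have U0_unitary := unitary_kron2 UA0_unitary UB0_unitary.
have {}w1E : kron2 UA0 UB0 *m w1 = col4 x%:C 0 0 y%:C.
  by rewrite w1E col4_kets !scale0r !addr0.
have := col4_eta (kron2 UA0 UB0 *m w2).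
set v0 := _ (inord 0) 0; set v1 := _ (inord 1) 0; set v2 := _ (inord 2) 0.
set v3 := _ (inord 3) 0 => vE.
have v_norm : v0 * conjc v0 + v1 * conjc v1 + v2 * conjc v2 + v3 * conjc v3 = 1.
  have := unitary_adjmxM w2 w2 U0_unitary; rewrite w2_unit vE => /matrixP/(_ 0 0).
  by rewrite col4_dot mxE => E; apply: etrans E; ring.
have v_orth : x%:C * v0 + y%:C * v3 = 0.
  have := unitary_adjmxM w1 w2 U0_unitary; rewrite w12 w1E vE => /matrixP/(_ 0 0).
  by rewrite col4_dot mxE !conjcE => E; apply: etrans E; ring.
have [v0E v3E t_norm] := orthogonal_rotation xy v_orth.
set t := _ - _ in v0E v3E t_norm.
have [theta [theta_range ctheta stheta]] := polar_angle_quarter x0 y0 xy.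
have [z [c [z_unit c_unit zv1 zv2]]] := phase_alignment v1 v2.
pose T := conjc c * t.
have cT : c * T = t by rewrite /T mulrA c_unit mul1r.
have T_norm : normc v1 ^+ 2 + normc v2 ^+ 2 + normc T ^+ 2 = 1.
  suff : (normc v1 : R)%:C ^+ 2 + (normc v2 : R)%:C ^+ 2 + (normc T : R)%:C ^+ 2 = 1 :> C.
    by rewrite -!rmorphXn -!rmorphD => /(@complexI R).
  rewrite -!mulcJ_normc /T conjcM conjcK.
  transitivity ((c * conjc c) * (t * conjc t) + v1 * conjc v1 + v2 * conjc v2); first ring.
  by rewrite c_unit t_norm mul1r; apply: etrans v_norm; ring.
have [phi [alpha [beta [phi_range alpha_range beta_range [ca sa] eT]]]] :=
  spherical_coords (normc_ge0 v1) (normc_ge0 v2) T_norm.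
have [PA_unitary PB_unitary] := unitary2_phase z_unit.
exists (mat2 z 0 0 (conjc z) *m UA0), (mat2 (conjc z) 0 0 z *m UB0).
exists theta, phi, alpha, beta, c; split => //.
  by split; apply: unitary2M.
rewrite -kron2M -!mulmxA w1E vE !kron2_phase_col4 // !mulr0 zv1 zv2 eT.
rewrite -ca -sa ctheta stheta !col4_kets; split; first by rewrite !scale0r !addr0.
rewrite v0E v3E -cT; apply/matrixP => k j; rewrite !mxE; ring.
Qed.

End LocalForm.

Theorem mainTheorem1 (R : realType) (sigma : 'M[R[i]]_4) :
  density4 sigma -> (\rank sigma <= 2)%N ->
  exists (UA UB : 'M[R[i]]_2) (theta phi alpha beta nu1 nu2 : R),
    [/\ unitary2 UA /\ unitary2 UB,
        [/\ 0 <= theta <= pi / 2, 0 <= phi <= pi / 2 & 0 <= alpha <= pi / 2],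
        0 <= beta <= 2 * pi,
        [/\ 0 <= nu1 <= 1, 0 <= nu2 <= 1 & nu1 + nu2 = 1] &
        let psi1 : 'cV[R[i]]_4 :=
          (cos theta)%:C *: ket R 0 0 + (sin theta)%:C *: ket R 1 1 in
        let psi2 : 'cV[R[i]]_4 :=
          (cos phi)%:C *: ((cos alpha)%:C *: ket R 0 1 + (sin alpha)%:C *: ket R 1 0)
          + ((cos beta +i* sin beta) * (sin phi)%:C)
              *: ((sin theta)%:C *: ket R 0 0 - (cos theta)%:C *: ket R 1 1) in
        kron2 UA UB *m sigma *m adjmx (kron2 UA UB)
          = nu1%:C *: proj psi1 + nu2%:C *: proj psi2].
Proof.
move=> sigma_density sigma_rank.
have [w1 [w2 [n1 [n2 [w1_unit w2_unit w12 [n1_ge0 n2_ge0 n12] ->]]]]] :=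
  density4_rank2_decomp sigma_density sigma_rank.
have [UA [UB [th [ph [al [be [c [UAB theta_range beta_range c_unit [w1E w2E]]]]]]]]] :=
  orthonormal_pair_local_form w1_unit w2_unit w12.
exists UA, UB, th, ph, al, be, n1, n2; split => //.
  by split => //; apply/andP; split => //; lra.
rewrite mulmxDr mulmxDl -!scalemxAr -!scalemxAl !proj_mulmx w1E w2E projZ c_unit.
by rewrite scale1r.
Qed.
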